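(* Let $X$ be a Noetherian $R$-module such that every $M$-prime submodule $P$ of $X$ is virtually maximal (i.e. $X/P$ is a direct sum of pairwise isomorphic simple modules). Then $X/\mathrm{rad}_M(X)$ is an Artinian $R$-module.
   Context: $R$ is a ring with identity, modules are unital left $R$-modules, $M$ is a fixed left $R$-module. For $N\le M$ and a module $X$, $N\cdot X$ is the intersection of the kernels of all homomorphisms $X\to W$ where $W$ ranges over modules with $f(N)=0$ for all $f\in\mathrm{Hom}_R(M,W)$ (for $Y\le X$, $N\cdot Y$ is formed regarding $Y$ as a module). A proper submodule $P$ of $X$ is $M$-prime if for all $N\le M$, $Y\le X$, $N\cdot Y\subseteq P$ implies $N\cdot X\subseteq P$ or $Y\subseteq P$. $\mathrm{rad}_M(X)$ is the intersection of all $M$-prime submodules of $X$ if $X$ has at least one, and $\mathrm{rad}_M(X)=X$ otherwise. *)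

(* left modules are [lmodType R] over [R : pzRingType]
   (a possibly non-commutative ring with identity). *)
From HB Require Import structures.
From mathcomp Require Import all_boot all_algebra.
From Stdlib Require Import List.
Set Implicit Arguments.
Unset Strict Implicit.
Unset Printing Implicit Defensive.
Import GRing.Theory.
Local Open Scope ring_scope.

Section ModuleDefs.
Variable R : pzRingType.

Definition submod (X : lmodType R) (S : X -> Prop) : Prop :=
  S 0 /\ forall (a : R) (u v : X), S u -> S v -> S (a *: u + v).

Definition incl (X : lmodType R) (A B : X -> Prop) : Prop :=
  forall x, A x -> B x.

Definition is_hom (A B : lmodType R) (f : A -> B) : Prop :=
  forall (a : R) (u v : A), f (a *: u + v) = a *: f u + f v.

(* A homomorphism from the submodule Y (regarded as a module) to B:
   a function whose restriction to Y is R-linear (values off Y irrelevant). *)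
Definition hom_on (A B : lmodType R) (Y : A -> Prop) (f : A -> B) : Prop :=
  forall (a : R) (u v : A), Y u -> Y v -> f (a *: u + v) = a *: f u + f v.

Definition kills (M : lmodType R) (N : M -> Prop) (W : lmodType R) : Prop :=
  forall f : M -> W, is_hom f -> forall m, N m -> f m = 0.

Definition prodM (M : lmodType R) (N : M -> Prop) (X : lmodType R) (Y : X -> Prop)
  : X -> Prop :=
  fun y => Y y /\
    forall W : lmodType R, kills N W ->
      forall f : X -> W, hom_on Y f -> f y = 0.

Definition fullset (X : lmodType R) : X -> Prop := fun _ => True.

Definition Mprime (M X : lmodType R) (P : X -> Prop) : Prop :=
  submod P /\ (exists x, ~ P x) /\
  forall (N : M -> Prop) (Y : X -> Prop), submod N -> submod Y ->
    incl (prodM N Y) P -> incl (prodM N (@fullset X)) P \/ incl Y P.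

(* rad_M(X): intersection of all M-prime submodules if there is one, else X. *)
Definition radM (M X : lmodType R) : X -> Prop :=
  fun x => (exists P : X -> Prop, Mprime M P) -> forall P, Mprime M P -> P x.

Definition noetherian (X : lmodType R) : Prop :=
  forall C : nat -> X -> Prop, (forall n, submod (C n)) ->
    (forall n, incl (C n) (C n.+1)) ->
    exists n, forall m, (n <= m)%N -> incl (C m) (C n).

(* X/K is Artinian: DCC on submodules of X/K, i.e. (correspondence theorem)
   on submodules of X containing K. *)
Definition artinian_quot (X : lmodType R) (K : X -> Prop) : Prop :=
  forall C : nat -> X -> Prop, (forall n, submod (C n) /\ incl K (C n)) ->
    (forall n, incl (C n.+1) (C n)) ->
    exists n, forall m, (n <= m)%N -> incl (C n) (C m).

Definition simple_mod (S : lmodType R) : Prop :=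
  (exists s : S, s <> 0) /\
  forall T : S -> Prop, submod T -> (forall s, T s -> s = 0) \/ (forall s, T s).

Definition fin_supp (I : Type) (S : lmodType R) (g : I -> S) : Prop :=
  exists l : list I, forall i, ~ In i l -> g i = 0.

(* P is virtually maximal in X: X/P is isomorphic to a direct sum
   (+)_{i in I} S of copies of one simple module S, expressed as a surjective
   homomorphism f : X -> (+)_{i in I} S (elements = finitely supported
   functions I -> S, operations componentwise) whose kernel is exactly P. *)
Definition virtually_maximal (X : lmodType R) (P : X -> Prop) : Prop :=
  exists (S : lmodType R) (I : Type) (f : X -> I -> S),
    simple_mod S /\
    (forall (a : R) (u v : X) (i : I), f (a *: u + v) i = a *: f u i + f v i) /\
    (forall x, fin_supp (f x)) /\
    (forall g : I -> S, fin_supp g -> exists x, forall i, f x i = g i) /\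
    (forall x, (forall i, f x i = 0) <-> P x).

End ModuleDefs.

Arguments radM [R] M X _.

(* An M-prime P of X is an intersection of the finitely many kernels of the
   coordinate maps X -> X/P ~ S^(I): I is finite because X is Noetherian, and
   each kernel has simple cokernel. Hence X/P is Artinian for every M-prime P.
   By Noetherian induction every submodule K of X has a finite family of
   M-primes over it such that every M-prime over K contains one of them: if K
   is neither prime nor X, a witness (N, Y) of non-primeness gives the two
   strictly larger submodules K + N.X and K + Y, and every M-prime over K lies
   over one of them. For K = 0 this writes rad_M(X) as a finite intersection of
   M-primes, and Artinian quotients are closed under finite intersections. *)
From mathcomp Require Import all_boot all_algebra.
From Stdlib Require Import ClassicalEpsilon.
From Stdlib Require List.
Set Implicit Arguments.
Unset Strict Implicit.
Unset Printing Implicit Defensive.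
Import GRing.Theory.
Local Open Scope ring_scope.

Section Submodules.
Variables (R : pzRingType) (X : lmodType R).
Implicit Types A B K P Q : X -> Prop.

Lemma submodD A u v : submod A -> A u -> A v -> A (u + v).
Proof. by move=> [_ sA] Au Av; have := sA 1 u v Au Av; rewrite scale1r. Qed.

Lemma submodN A u : submod A -> A u -> A (- u).
Proof. by move=> [A0 sA] Au; have := sA (-1) u 0 Au A0; rewrite addr0 scaleN1r. Qed.

Lemma submodB A u v : submod A -> A u -> A v -> A (u - v).
Proof. by move=> sA Au Av; apply: submodD (submodN _ _) => //. Qed.

Definition addsub A B : X -> Prop := fun z => exists a b, [/\ A a, B b & z = a + b].

Definition capsub A B : X -> Prop := fun x => A x /\ B x.

Definition bigcap (L : list (X -> Prop)) : X -> Prop :=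
  fun x => forall P, List.In P L -> P x.

Lemma submod_addsub A B : submod A -> submod B -> submod (addsub A B).
Proof.
move=> [A0 sA] [B0 sB]; split; first by exists 0, 0; rewrite addr0.
move=> r _ _ [a1 [b1 [Aa1 Bb1 ->]]] [a2 [b2 [Aa2 Bb2 ->]]].
exists (r *: a1 + a2), (r *: b1 + b2); split; [exact: sA | exact: sB |].
by rewrite scalerDr addrACA.
Qed.

Lemma submod_capsub A B : submod A -> submod B -> submod (capsub A B).
Proof.
move=> [A0 sA] [B0 sB]; split => // r u v [Au Bu] [Av Bv].
by split; [exact: sA | exact: sB].
Qed.

Lemma submod_bigcap L : (forall P, List.In P L -> submod P) -> submod (bigcap L).
Proof.
move=> sL; split=> [P /sL [] // | r u v Lu Lv P LP].
by case: (sL P LP) => _; apply; [exact: Lu | exact: Lv].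
Qed.

Lemma incl_addsubl A B : submod B -> incl A (addsub A B).
Proof. by move=> [B0 _] a Aa; exists a, 0; rewrite addr0. Qed.

Lemma incl_addsubr A B : submod A -> incl B (addsub A B).
Proof. by move=> [A0 _] b Bb; exists 0, b; rewrite add0r. Qed.

Lemma addsub_least A B K : submod K -> incl A K -> incl B K -> incl (addsub A B) K.
Proof.
by move=> sK AK BK _ [a [b [Aa Bb ->]]]; apply: submodD; [| apply: AK | apply: BK].
Qed.

Lemma modular_incl A B Q : submod A -> submod B -> submod Q -> incl A B ->
  incl (addsub B Q) (addsub A Q) -> incl (capsub B Q) A -> incl B A.
Proof.
move=> sA sB sQ AB BQ_AQ BQ_A b Bb.
have [a [q [Aa Qq def_b]]] := BQ_AQ b (incl_addsubl sQ Bb).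
have Bq : B q.
  have -> : q = b - a by rewrite def_b addrC addKr.
  by apply: submodB => //; apply: AB.
by rewrite def_b; apply: submodD => //; apply: BQ_A.
Qed.

End Submodules.

Section ArtinianQuotients.
Variables (R : pzRingType) (X : lmodType R).
Implicit Types (K P Q : X -> Prop) (C : nat -> X -> Prop).

Lemma artinian_quot_ext K K' :
  (forall x, K x <-> K' x) -> artinian_quot K -> artinian_quot K'.
Proof.
move=> KK' aK C CK'; apply: aK => n; case: (CK' n) => sC K'C.
by split=> // x /KK' /K'C.
Qed.

Lemma descending_incl C : (forall n, incl (C n.+1) (C n)) ->
  forall n m, (n <= m)%N -> incl (C m) (C n).
Proof.
move=> Cdesc n m /subnK <-; elim: (m - n)%N => [|k IHk] x //=.
by rewrite addSn => /Cdesc /IHk.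
Qed.

Lemma artinian_quot_full K : (forall x, K x) -> artinian_quot K.
Proof. by move=> Kfull C CK _; exists 0%N => m _ x _; case: (CK m) => _; apply. Qed.

Lemma artinian_quotI P Q : submod P -> submod Q ->
  artinian_quot P -> artinian_quot Q -> artinian_quot (capsub P Q).
Proof.
move=> sP sQ aP aQ C CPQ Cdesc.
have sC m : submod (C m) by case: (CPQ m).
pose D m := addsub (C m) Q.
pose E m := addsub (capsub (C m) Q) P.
have Ddesc m : incl (D m.+1) (D m).
  by move=> _ [c [q [Cc Qq ->]]]; exists c, q; split=> //; apply: Cdesc.
have Edesc m : incl (E m.+1) (E m).
  move=> _ [c [p [[Cc Qc] Pp ->]]]; exists c, p.
  by split=> //; split=> //; apply: Cdesc.
have [n1 Dstab] : exists n1, forall m, (n1 <= m)%N -> incl (D n1) (D m).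
  apply: aQ Ddesc => m; split; first exact: submod_addsub.
  exact: incl_addsubr.
have [n2 Estab] : exists n2, forall m, (n2 <= m)%N -> incl (E n2) (E m).
  apply: aP Edesc => m; split; first exact/submod_addsub/sP/submod_capsub.
  exact/incl_addsubr/submod_capsub.
exists (maxn n1 n2) => m le_nm; set n := maxn n1 n2 in le_nm *.
have Cmn : incl (C m) (C n) := descending_incl Cdesc le_nm.
apply: (modular_incl (sC m) (sC n) sQ Cmn).
  move=> x /(descending_incl Ddesc (leq_maxl n1 n2)) /Dstab; apply.
  exact: leq_trans (leq_maxl n1 n2) le_nm.
move=> x Cnx.
suff : incl (capsub (C n) Q) (capsub (C m) Q) by move/(_ x Cnx) => [].
apply: (modular_incl (submod_capsub (sC m) sQ) (submod_capsub (sC n) sQ) sP).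
- by move=> y [Cy Qy]; split=> //; apply: Cmn.
- move=> y /(descending_incl Edesc (leq_maxr n1 n2)) /Estab; apply.
  exact: leq_trans (leq_maxr n1 n2) le_nm.
- by move=> y [[_ Qy] Py]; split=> //; case: (CPQ m) => _; apply.
Qed.

Lemma artinian_quot_bigcap L :
  (forall P, List.In P L -> submod P /\ artinian_quot P) -> artinian_quot (bigcap L).
Proof.
elim: L => [|P L IHL] sLaL; first by apply: artinian_quot_full => x P [].
have [sP aP] := sLaL P (or_introl erefl).
have sL Q : List.In Q L -> submod Q /\ artinian_quot Q by move=> LQ; apply: sLaL; right.
apply: artinian_quot_ext (artinian_quotI sP _ aP (IHL sL)).
  move=> x; split=> [[Px Lx] Q [<- | /Lx] // | PLx].
  by split=> [|Q LQ]; apply: PLx; [left | right].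
by apply: submod_bigcap => Q /sL [].
Qed.

Lemma hom_on0 (Y : X -> Prop) (W : lmodType R) (f : X -> W) :
  Y 0 -> hom_on Y f -> f 0 = 0.
Proof.
move=> Y0 hf; have := hf 1 0 0 Y0 Y0; rewrite !scale1r addr0.
by move=> /(congr1 (fun w => w - f 0)); rewrite addrK subrr.
Qed.

Lemma hom0 (W : lmodType R) (f : X -> W) : is_hom f -> f 0 = 0.
Proof. by move=> hf; apply: (@hom_on0 (@fullset R X)) => // a u v _ _. Qed.

Lemma homB (W : lmodType R) (f : X -> W) u v : is_hom f -> f (u - v) = f u - f v.
Proof.
by move=> hf; rewrite -scaleN1r addrC hf scaleN1r addrC.
Qed.

Lemma artinian_quot_ker_simple (S : lmodType R) (f : X -> S) :
  is_hom f -> simple_mod S -> artinian_quot (fun x => f x = 0).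
Proof.
move=> hf [_ Ssimple] C Cker Cdesc.
have sC m : submod (C m) by case: (Cker m).
pose T m s := exists2 x, C m x & f x = s.
have sT m : submod (T m).
  split; first by exists 0; [case: (sC m) | exact: hom0].
  move=> r _ _ [x Cx <-] [y Cy <-]; exists (r *: x + y); last exact: hf.
  by case: (sC m) => _; apply.
have [[m Tm0] | Tfull] := classic (exists m, forall s, T m s -> s = 0).
  exists m => m' _ x Cx; case: (Cker m') => _; apply.
  by apply: Tm0; exists x.
exists 0%N => m _ x _.
have [c Cc fc] : T m (f x).
  case: (Ssimple (T m) (sT m)) => [Tm0 | ]; last exact.
  by case: Tfull; exists m.
rewrite -(subrK c x); apply: submodD => //; case: (Cker m) => _; apply.
by rewrite homB // fc subrr.
Qed.

End ArtinianQuotients.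

Lemma noetherian_ind (R : pzRingType) (X : lmodType R) (Pr : (X -> Prop) -> Prop) :
  noetherian X ->
  (forall K, submod K -> ~ Pr K ->
     exists K', [/\ submod K', incl K K', ~ incl K' K & ~ Pr K']) ->
  forall K, submod K -> Pr K.
Proof.
move=> noeX ascend K0 sK0; apply: NNPP => nPrK0.
pose bigger K K' := [/\ submod K', incl K K', ~ incl K' K & ~ Pr K'].
pose next K := epsilon (inhabits K) (bigger K).
have next_bigger K : submod K -> ~ Pr K -> bigger K (next K).
  by move=> sK nPrK; apply: epsilon_spec; apply: ascend.
pose C n := iter n next K0.
have badC n : submod (C n) /\ ~ Pr (C n).
  elim: n => [|n [sC nPrC]] //; by case: (next_bigger _ sC nPrC).
have Casc n : incl (C n) (C n.+1) by case: (badC n) => sC /(next_bigger _ sC) [].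
have [n Cstab] := noeX C (fun n => (badC n).1) Casc.
case: (badC n) => sC /(next_bigger _ sC) [_ _ + _]; apply.
exact: (Cstab n.+1 (leqnSn n)).
Qed.

Section VirtuallyMaximal.
Variables (R : pzRingType) (X S : lmodType R) (I : Type) (f : X -> I -> S).
Hypothesis S_simple : simple_mod S.
Hypothesis f_linear :
  forall (a : R) (u v : X) (i : I), f (a *: u + v) i = a *: f u i + f v i.
Hypothesis f_onto : forall g : I -> S, fin_supp g -> exists x, forall i, f x i = g i.

Lemma hom_coord i : is_hom (f^~ i).
Proof. by move=> a u v; apply: f_linear. Qed.

Lemma exists_delta i s : exists x, f x i = s /\ forall j, j <> i -> f x j = 0.
Proof.
pose g j := if excluded_middle_informative (j = i) then s else 0.
have [|x fx] := f_onto (g := g).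
  exists [:: i] => j /= ji; rewrite /g.
  by case: excluded_middle_informative => // ij; case: ji; left.
exists x; split=> [|j ji]; rewrite fx /g; case: excluded_middle_informative => //.
Qed.

Definition supported_in (l : list I) : X -> Prop :=
  fun x => forall i, ~ List.In i l -> f x i = 0.

Lemma submod_supported_in l : submod (supported_in l).
Proof.
split=> [i _ | a u v lu lv i li]; first exact: hom0 (hom_coord i).
by rewrite f_linear lu // lv // scaler0 addr0.
Qed.

Lemma noetherian_fin_index : noetherian X -> exists l : list I, forall i, List.In i l.
Proof.
move=> noeX.
pose Pr K := forall l, incl (supported_in l) K -> incl K (supported_in l) ->
  exists l' : list I, forall i, List.In i l'.
suff PrI : Pr (supported_in [::]) by exact: (PrI [::] (fun x => id) (fun x => id)).
apply: (noetherian_ind noeX) (submod_supported_in _) => K sK nPrK.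
have [l Kl nfin] : exists2 l, incl K (supported_in l)
    & ~ exists l' : list I, forall i, List.In i l'.
  apply: NNPP => nex; apply: nPrK => l _ Kl.
  by apply: NNPP => nfin; apply: nex; exists l.
have [i li] : exists i, ~ List.In i l.
  apply: NNPP => nex; apply: nfin; exists l => i.
  by apply: NNPP => li; apply: nex; exists i.
exists (supported_in (i :: l)); split.
- exact: submod_supported_in.
- by move=> x /Kl xl j /= /Decidable.not_or [_ /xl].
- have [[s s_neq0] _] := S_simple.
  have [x [fxi fx0]] := exists_delta i s.
  move=> /(_ x) il_K; apply: s_neq0; rewrite -fxi; apply: Kl li; apply: il_K.
  by move=> j /= /Decidable.not_or [ij _]; apply/fx0/nesym.
- by move=> PrK'; apply: nfin; exact: (PrK' (i :: l) (fun x => id) (fun x => id)).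
Qed.

End VirtuallyMaximal.

Lemma artinian_quot_virtually_maximal (R : pzRingType) (X : lmodType R)
    (P : X -> Prop) :
  noetherian X -> virtually_maximal P -> artinian_quot P.
Proof.
move=> noeX [S [I [f [S_simple [f_linear [_ [f_onto kerP]]]]]]].
have [l l_full] := noetherian_fin_index S_simple f_linear f_onto noeX.
pose kers := List.map (fun i x => f x i = 0) l.
apply: (artinian_quot_ext (K := bigcap kers)).
  move=> x; split=> [kx | /kerP fx0 _ /List.in_map_iff [i [<- _]] //].
  by apply/kerP => i; apply: (kx (fun x => f x i = 0)); apply/List.in_map/l_full.
apply: artinian_quot_bigcap => _ /List.in_map_iff [i [<- _]].
have hf := hom_coord f_linear i.
split; last exact: artinian_quot_ker_simple.
by split=> [|a u v fu fv]; rewrite ?(hom0 hf) // hf fu fv scaler0 addr0.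
Qed.

Section MprimeBase.
Variables (R : pzRingType) (M X : lmodType R).
Implicit Types (K P : X -> Prop).

Lemma submod_prodM (N : M -> Prop) (Y : X -> Prop) : submod Y -> submod (prodM N Y).
Proof.
move=> [Y0 sY]; split=> [|a u v [Yu Nu] [Yv Nv]].
  by split=> // W _ g; apply: hom_on0.
split=> [|W kW g hg]; first exact: sY.
by rewrite hg // (Nu W kW g hg) (Nv W kW g hg) scaler0 addr0.
Qed.

Definition fin_Mprime_base K : Prop :=
  exists Ps : list (X -> Prop),
    (forall P, List.In P Ps -> Mprime M P /\ incl K P) /\
    (forall P, Mprime M P -> incl K P -> exists2 Q, List.In Q Ps & incl Q P).

Lemma fin_Mprime_base_Mprime K : Mprime M K -> fin_Mprime_base K.
Proof.
move=> pK; exists [:: K]; split=> [P [<- | []] | P _ KP]; last by exists K; [left |].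
by split=> // x.
Qed.

Lemma fin_Mprime_base_full K : (forall x, K x) -> fin_Mprime_base K.
Proof. by move=> Kfull; exists [::]; split=> // P [_ [[x Px] _]] /(_ x (Kfull x)). Qed.

Lemma not_Mprime_witness K : submod K -> (exists x, ~ K x) -> ~ Mprime M K ->
  exists (N : M -> Prop) (Y : X -> Prop), [/\ submod N, submod Y, incl (prodM N Y) K,
    ~ incl (prodM N (@fullset R X)) K & ~ incl Y K].
Proof.
move=> sK Kproper nprime; apply: NNPP => nwit; apply: nprime; do 2!split=> //.
move=> N Y sN sY NYK; apply: NNPP => /Decidable.not_or [nNX nY].
by apply: nwit; exists N, Y.
Qed.

Lemma fin_Mprime_base_split K (N : M -> Prop) (Y : X -> Prop) : submod N -> submod Y ->
  incl (prodM N Y) K -> fin_Mprime_base (addsub K (prodM N (@fullset R X))) ->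
  fin_Mprime_base (addsub K Y) -> fin_Mprime_base K.
Proof.
move=> sN sY NYK [PA [PA_prime PA_base]] [PB [PB_prime PB_base]].
have sNX : submod (prodM N (@fullset R X)) by apply: submod_prodM.
exists (PA ++ PB); split.
  move=> P /(List.in_app_or PA PB P) [/PA_prime | /PB_prime] [pP AP];
    by split=> // x Kx; apply: AP; exact: incl_addsubl.
move=> P pP KP; have [sP [_ Pprime]] := pP.
have [NXP | YP] := Pprime N Y sN sY (fun x NYx => KP x (NYK x NYx)).
  have [Q PAQ QP] := PA_base P pP (addsub_least sP KP NXP).
  by exists Q => //; apply: List.in_or_app; left.
have [Q PBQ QP] := PB_base P pP (addsub_least sP KP YP).
by exists Q => //; apply: List.in_or_app; right.
Qed.

Lemma fin_Mprime_base_ascend K : submod K -> ~ fin_Mprime_base K ->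
  exists K', [/\ submod K', incl K K', ~ incl K' K & ~ fin_Mprime_base K'].
Proof.
move=> sK nbase.
have Kproper : exists x, ~ K x.
  apply: NNPP => Kfull; apply/nbase/fin_Mprime_base_full => x.
  by apply: NNPP => Kx; apply: Kfull; exists x.
have nprime : ~ Mprime M K by move/fin_Mprime_base_Mprime.
have [N [Y [sN sY NYK nNX nY]]] := not_Mprime_witness sK Kproper nprime.
have ascend (A : X -> Prop) :
    submod A -> ~ incl A K -> ~ fin_Mprime_base (addsub K A) ->
    exists K', [/\ submod K', incl K K', ~ incl K' K & ~ fin_Mprime_base K'].
  move=> sA nAK nbaseA; exists (addsub K A); split=> //.
  - exact: submod_addsub.
  - exact: incl_addsubl.
  - by move=> AK; apply: nAK => x /(incl_addsubr sK) /AK.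
have sNX : submod (prodM N (@fullset R X)) by apply: submod_prodM.
have [baseNX | ] := classic (fin_Mprime_base (addsub K (prodM N (@fullset R X))));
  last exact: ascend.
have [baseY | ] := classic (fin_Mprime_base (addsub K Y)); last exact: ascend.
by case: nbase; apply: fin_Mprime_base_split baseNX baseY.
Qed.

Lemma noetherian_fin_Mprime_base K : noetherian X -> submod K -> fin_Mprime_base K.
Proof. by move=> noeX; apply: (noetherian_ind noeX); apply: fin_Mprime_base_ascend. Qed.

Lemma radM_bigcap (Ps : list (X -> Prop)) : (forall P, List.In P Ps -> Mprime M P) ->
  (forall P, Mprime M P -> exists2 Q, List.In Q Ps & incl Q P) ->
  forall x, bigcap Ps x <-> radM M X x.
Proof.
move=> Ps_prime Ps_base x; split=> [Psx _ P /Ps_base [Q PsQ QP] | radx P PsP].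
  by apply: QP; apply: Psx.
by apply: radx (Ps_prime P PsP); exists P; apply: Ps_prime.
Qed.

End MprimeBase.

Theorem theorem5p9 (R : pzRingType) (M X : lmodType R) :
  noetherian X ->
  (forall P : X -> Prop, Mprime M P -> virtually_maximal P) ->
  artinian_quot (radM M X).
Proof.
move=> noeX vmax.
have sZ : submod (fun x : X => x = 0) by split=> // a _ _ -> ->; rewrite scaler0 addr0.
have [Ps [Ps_prime Ps_base]] := noetherian_fin_Mprime_base M noeX sZ.
have Ps_cover P : Mprime M P -> exists2 Q, List.In Q Ps & incl Q P.
  by move=> pP; apply: Ps_base => // _ ->; case: pP => [[]].
apply: (artinian_quot_ext (radM_bigcap (fun P PsP => proj1 (Ps_prime P PsP)) Ps_cover)).
apply: artinian_quot_bigcap => P /Ps_prime [pP _]; split; first by case: pP.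
exact: artinian_quot_virtually_maximal noeX (vmax P pP).
Qed.
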